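(* Let $X$ be a paracompact Hausdorff homologically locally connected topological space. Then every singular cohomology class $\xi\in H^1(X;\mathbb{R})$ is the cohomology class of some continuous closed 1-form on $X$.
   Context: $X$ is homologically locally connected if for every $x\in X$ and every neighborhood $U$ of $x$ there is a neighborhood $V\subset U$ of $x$ such that $\tilde H_q(V)\to\tilde H_q(U)$ is trivial for all $q$. A continuous closed 1-form on $X$ is a collection $\{f_U\}_{U\in\mathcal U}$ of continuous functions $f_U:U\to\mathbb{R}$, $\mathcal U$ an open cover, with $f_U-f_V$ locally constant on $U\cap V$ (up to the obvious equivalence). For a path $\gamma:[0,1]\to X$, $\int_\gamma\omega=\sum_{i}[f_{U_i}(\gamma(t_{i+1}))-f_{U_i}(\gamma(t_i))]$ for a subdivision with $\gamma[t_i,t_{i+1}]\subset U_i\in\mathcal U$. The cohomology class of $\omega$ is the element of $\mathrm{Hom}(H_1(X);\mathbb{R})=H^1(X;\mathbb{R})$ given by the homomorphism of periods $[\gamma]\mapsto\int_\gamma\omega$ on loops. *)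

From Stdlib Require List.
From HB Require Import structures.
From mathcomp Require Import all_boot all_order all_algebra.
From mathcomp Require Import all_classical all_reals all_analysis.
Set Implicit Arguments. Unset Strict Implicit. Unset Printing Implicit Defensive.
Import Order.TTheory GRing.Theory Num.Theory numFieldNormedType.Exports.
Local Open Scope classical_set_scope.
Local Open Scope ring_scope.

(** Paracompactness: every open cover has a locally finite open refinement
    (Hausdorffness is assumed separately, via [hausdorff_space]). *)
Definition paracompact (X : topologicalType) : Prop :=
  forall (I : Type) (U : I -> set X),
    (forall i, open (U i)) -> (forall x, exists i, U i x) ->
    exists (J : Type) (W : J -> set X),
      [/\ (forall j, open (W j)),
          (forall x, exists j, W j x),
          (forall j, exists i, W j `<=` U i) &
          (forall x : X, exists N : set X, nbhs x N /\ finite_set [set j | W j `&` N !=set0])].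

Section Singular.
Variables (R : realType) (X : topologicalType).

Definition std_simplex (n : nat) : set 'rV[R]_(n.+1) :=
  [set t | (forall i, 0 <= t ord0 i) /\ \sum_i t ord0 i = 1].

(** A singular n-simplex is a map continuous on the standard simplex; two maps
    denote the same singular simplex iff they agree on the standard simplex. *)
Definition sing_simplex (n : nat) (s : 'rV[R]_(n.+1) -> X) : Prop :=
  {within @std_simplex n, continuous s}.

Definition same_simplex (n : nat) (s t : 'rV[R]_(n.+1) -> X) : Prop :=
  forall u, @std_simplex n u -> s u = t u.

Definition chain (n : nat) := seq (int * ('rV[R]_(n.+1) -> X)).

Definition coef (n : nat) (c : chain n) (t : 'rV[R]_(n.+1) -> X) : int :=
  \sum_(p <- c) (if `[< same_simplex p.2 t >] then p.1 else 0).

(** i-th face inclusion Delta^n -> Delta^(n+1) (insert a 0 at position i) *)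
Definition face (n : nat) (i : 'I_(n.+2)) (u : 'rV[R]_(n.+1)) : 'rV[R]_(n.+2) :=
  \row_j (match unlift i j with Some k => u ord0 k | None => 0 end).

Definition bnd (n : nat) (c : chain n.+1) : chain n :=
  flatten [seq [seq (((-1) ^+ (nat_of_ord i)) * p.1, p.2 \o face i) | i <- enum 'I_(n.+2)]
          | p <- c].

Definition chain_in (n : nat) (U : set X) (c : chain n) : Prop :=
  forall p, List.In p c -> sing_simplex p.2 /\ p.2 @` @std_simplex n `<=` U.

(** reduced cycles: augmentation zero in degree 0, boundary zero otherwise *)
Definition rcycle (q : nat) : chain q -> Prop :=
  match q with
  | 0 => fun c => \sum_(p <- c) p.1 = 0
  | q'.+1 => fun c => forall t, coef (bnd c) t = 0
  end.

(** the map \tilde H_q(V) -> \tilde H_q(U) induced by inclusion is trivial *)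
Definition hom_trivial (q : nat) (V U : set X) : Prop :=
  forall c : chain q, chain_in V c -> rcycle c ->
    exists d : chain q.+1, chain_in U d /\ forall t, coef (bnd d) t = coef c t.

Definition HLC : Prop :=
  forall (x : X) (U : set X), nbhs x U ->
    exists V : set X, [/\ nbhs x V, V `<=` U & forall q, hom_trivial q V U].

Definition cocycle1 (xi : ('rV[R]_2 -> X) -> R) : Prop :=
  (forall s t, same_simplex s t -> xi s = xi t) /\
  (forall s : 'rV[R]_3 -> X, sing_simplex s ->
     \sum_(i < 3) (-1) ^+ (nat_of_ord i) * xi (s \o face i) = 0).

Definition closed_1form (I : Type) (U : I -> set X) (f : I -> X -> R) : Prop :=
  [/\ (forall i, open (U i)),
      (forall x, exists i, U i x),
      (forall i, {within U i, continuous f i}) &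
      (forall i j x, U i x -> U j x ->
         exists W, [/\ nbhs x W, W `<=` U i `&` U j &
                      forall y, W y -> f i y - f j y = f i x - f j x])].

Definition unit_interval : set R := [set s | 0 <= s <= 1].

Definition loop (g : R -> X) : Prop :=
  {within unit_interval, continuous g} /\ g 0 = g 1.

Definition admissible (I : Type) (U : I -> set X) (g : R -> X)
    (n : nat) (t : nat -> R) (k : nat -> I) : Prop :=
  [/\ t 0%N = 0, t n = 1,
      (forall m, (m < n)%N -> t m <= t m.+1) &
      (forall m, (m < n)%N -> forall s, t m <= s <= t m.+1 -> U (k m) (g s))].

Definition riemann_sum (I : Type) (f : I -> X -> R) (g : R -> X)
    (n : nat) (t : nat -> R) (k : nat -> I) : R :=
  \sum_(m < n) (f (k m) (g (t m.+1)) - f (k m) (g (t m))).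

Definition path_integral_is (I : Type) (U : I -> set X) (f : I -> X -> R)
    (g : R -> X) (v : R) : Prop :=
  (exists n t k, admissible U g n t k) /\
  (forall n t k, admissible U g n t k -> riemann_sum f g n t k = v).

(** a path [0,1] -> X viewed as a singular 1-simplex (vertex 0 |-> g 0) *)
Definition path_simplex (g : R -> X) : 'rV[R]_2 -> X := fun u => g (u ord0 ord_max).

End Singular.

(* Around every point, HLC in degree 1 makes [xi] vanish on 1-cycles of a
   neighbourhood [V1], and HLC in degree 0 joins any two points of a smaller
   neighbourhood [V2] by a 1-chain in [V1]; hence [h y = xi (chain from x to y)]
   is a well-defined potential of [xi] on [V2]. Two potentials differ by a
   locally constant function where both are defined. Paracompactness gives a
   locally finite cover by such sets and Urysohn bump functions [phi_j]
   subordinate to it; subtracting from every potential [h_j] the weighted mean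
   [Q = sum phi_j h_j / sum phi_j] makes [h_j - Q] continuous while keeping the
   differences, so [{h_j - Q}] is a continuous closed 1-form. Along a loop the
   [Q]-terms of a Riemann sum telescope away, and the cocycle condition adds up
   the values of [xi] on the segments of the subdivision to [xi] of the loop. *)

From mathcomp Require Import all_boot all_order all_algebra.
From mathcomp Require Import all_classical all_reals all_analysis.
From mathcomp Require Import ring lra finmap.
Import Order.TTheory GRing.Theory Num.Theory numFieldNormedType.Exports.
Local Open Scope classical_set_scope.
Local Open Scope ring_scope.
Set Implicit Arguments. Unset Strict Implicit. Unset Printing Implicit Defensive.

Section SingularChains.
Variables (R : realType) (X : topologicalType).

Lemma same_simplex_sym n (s t : 'rV[R]_n.+1 -> X) :
  same_simplex s t -> same_simplex t s.
Proof. by move=> st u Hu; rewrite st. Qed.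

Lemma same_simplex_trans n (s t w : 'rV[R]_n.+1 -> X) :
  same_simplex s t -> same_simplex t w -> same_simplex s w.
Proof. by move=> st tw u Hu; rewrite st // tw. Qed.

Definition chain_opp n (c : chain R X n) : chain R X n := [seq (- p.1, p.2) | p <- c].

Lemma coef_cat n (c1 c2 : chain R X n) t : coef (c1 ++ c2) t = coef c1 t + coef c2 t.
Proof. by rewrite /coef big_cat. Qed.

Lemma coef_opp n (c : chain R X n) t : coef (chain_opp c) t = - coef c t.
Proof.
rewrite /coef big_map -sumrN; apply: eq_bigr => p _ /=.
by case: ifP; rewrite ?oppr0.
Qed.

Lemma bnd_cat n (c1 c2 : chain R X n.+1) : bnd (c1 ++ c2) = bnd c1 ++ bnd c2.
Proof. by rewrite /bnd map_cat flatten_cat. Qed.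

Lemma bnd_opp n (c : chain R X n.+1) : bnd (chain_opp c) = chain_opp (bnd c).
Proof.
rewrite /bnd /chain_opp map_flatten -!map_comp; congr flatten.
apply: eq_map => p /=; rewrite -map_comp; apply: eq_map => i /=.
by rewrite mulrN.
Qed.

Lemma chain_in_cat n S (c1 c2 : chain R X n) :
  chain_in S c1 -> chain_in S c2 -> chain_in S (c1 ++ c2).
Proof. by move=> H1 H2 p /(List.in_app_or c1 c2)[/H1|/H2]. Qed.

Lemma chain_in_opp n S (c : chain R X n) : chain_in S c -> chain_in S (chain_opp c).
Proof. by move=> H p /List.in_map_iff[q [<- /H]]. Qed.

Lemma chain_inS n S S' (c : chain R X n) : S `<=` S' -> chain_in S c -> chain_in S' c.
Proof. by move=> SS' H p /H[sp Sp]; split => //; apply: subset_trans SS'. Qed.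

Definition point_simplex (x : X) : 'rV[R]_1 -> X := fun _ => x.

Definition point_diff (a b : X) : chain R X 0 :=
  [:: (1, point_simplex b); (-1, point_simplex a)].

Definition joins (S : set X) (a b : X) (d : chain R X 1) : Prop :=
  chain_in S d /\ forall t, coef (bnd d) t = coef (point_diff a b) t.

Lemma joinsS S S' a b d : S `<=` S' -> joins S a b d -> joins S' a b d.
Proof. by move=> SS' [dS bd]; split => //; apply: chain_inS dS. Qed.

Lemma hom_trivial0_joins V U a b : hom_trivial R 0 V U -> V a -> V b ->
  exists d, joins U a b d.
Proof.
move=> triv Va Vb; have [] := triv (point_diff a b).
- move=> p [<-|[<-|[]]]; split; try (by move=> _ [u _ <-]);
  exact/continuous_subspaceT/cst_continuous.
- by rewrite /= !big_cons big_nil.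
by move=> d [dU bd]; exists d.
Qed.

End SingularChains.

Section CocycleEvaluation.
Variables (R : realType) (X : topologicalType).
Variable xi : ('rV[R]_2 -> X) -> R.
Hypothesis xi_cocycle : cocycle1 xi.

Definition eval1 (c : chain R X 1) : R := \sum_(p <- c) p.1%:~R * xi p.2.

Lemma eval1_cat c1 c2 : eval1 (c1 ++ c2) = eval1 c1 + eval1 c2.
Proof. by rewrite /eval1 big_cat. Qed.

Lemma eval1_opp c : eval1 (chain_opp c) = - eval1 c.
Proof.
rewrite /eval1 big_map -sumrN; apply: eq_bigr => p _ /=.
by rewrite mulrNz mulNr.
Qed.

Lemma eval1_bnd S (d : chain R X 2) : chain_in S d -> eval1 (bnd d) = 0.
Proof.
elim: d => [|p d IH] dS; first by rewrite /eval1 big_nil.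
rewrite /bnd /= -/(bnd d) eval1_cat IH ?addr0; last by move=> q dq; apply: dS; right.
have [sp _] := dS p (or_introl erefl).
rewrite /eval1 big_map big_enum /=.
under eq_bigr do rewrite intrM rmorphXn /= rmorphN1 -mulrA mulrCA.
by rewrite -mulr_sumr xi_cocycle.2 // mulr0.
Qed.

(** Induction on the length: the terms whose simplex is [same_simplex] as the
    head one add up to [coef c p.2 * xi p.2 = 0]. *)
Lemma eval1_coef0 c : (forall t, coef c t = 0) -> eval1 c = 0.
Proof.
move: {2}(size c) (leqnn (size c)) => n; elim: n c => [|n IH] [|p c] //=;
  rewrite ?/eval1 ?big_nil // => size_c c0.
pose P (q : int * ('rV[R]_2 -> X)) := `[< same_simplex q.2 p.2 >].
rewrite (bigID P) /=.
have -> : \sum_(q <- p :: c | P q) q.1%:~R * xi q.2 = (coef (p :: c) p.2)%:~R * xi p.2.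
  rewrite /coef -big_mkcond /= rmorph_sum mulr_suml; apply: eq_bigr => q /asboolP pq.
  by rewrite (xi_cocycle.1 _ _ pq).
rewrite c0 mul0r add0r -big_filter; apply: IH.
  rewrite /= /P asboolT //= size_filter.
  exact: leq_trans (count_size _ _) size_c.
move=> t; rewrite /coef big_filter.
case: (boolP `[< same_simplex p.2 t >]) => /asboolP pt.
  apply: big1 => q /negP Pq; case: ifP => // /asboolP qt.
  by case: Pq; apply/asboolP; apply: same_simplex_trans qt (same_simplex_sym pt).
have := c0 t; rewrite /coef (bigID P) /= big1 ?add0r // => q /asboolP Pq.
case: ifP => // /asboolP qt.
by case: pt; apply: same_simplex_trans (same_simplex_sym Pq) qt.
Qed.

Lemma eval1_coef_eq c1 c2 : (forall t, coef c1 t = coef c2 t) -> eval1 c1 = eval1 c2.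
Proof.
move=> c12; apply/eqP; rewrite -subr_eq0 -eval1_opp -eval1_cat; apply/eqP.
by apply: eval1_coef0 => t; rewrite coef_cat coef_opp c12 subrr.
Qed.

Definition vanishes_on_cycles (S : set X) : Prop :=
  forall c : chain R X 1, chain_in S c -> (forall t, coef (bnd c) t = 0) -> eval1 c = 0.

Lemma hom_trivial1_vanishes S U : hom_trivial R 1 S U -> vanishes_on_cycles S.
Proof.
move=> triv c cS cyc; have [d [dU bd]] := triv c cS cyc.
by rewrite -(eval1_coef_eq bd) (eval1_bnd dU).
Qed.

Lemma eval1_joins_add S a b c d1 d2 d3 : vanishes_on_cycles S ->
  joins S a b d1 -> joins S b c d2 -> joins S a c d3 ->
  eval1 d1 + eval1 d2 = eval1 d3.
Proof.
move=> van [d1S b1] [d2S b2] [d3S b3].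
have := van (d1 ++ d2 ++ chain_opp d3).
rewrite !eval1_cat eval1_opp => cyc; apply/eqP; rewrite -subr_eq0 -addrA cyc //.
  by do 2 apply: chain_in_cat => //; apply: chain_in_opp.
move=> t; rewrite !bnd_cat bnd_opp !coef_cat coef_opp b1 b2 b3 /coef.
by rewrite !big_cons !big_nil /=; do 3 case: asboolP => _.
Qed.

Definition potential_on (S : set X) (h : X -> R) : Prop :=
  forall y y' e, S y -> S y' -> joins S y y' e -> h y' = h y + eval1 e.

Lemma potential_onS S S' h : S' `<=` S -> potential_on S h -> potential_on S' h.
Proof. by move=> S'S hS y y' e S'y S'y' /(joinsS S'S); apply: hS; apply: S'S. Qed.

Lemma potential_exists V W x : vanishes_on_cycles V -> W `<=` V ->
  hom_trivial R 0 W V -> W x -> exists h, potential_on W h.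
Proof.
move=> van WV triv Wx.
have path_values y : exists r, W y -> exists d, joins V x y d /\ r = eval1 d.
  have [Wy|nWy] := pselect (W y); last by exists 0.
  by have [d xd] := hom_trivial0_joins triv Wx Wy; exists (eval1 d) => _; exists d.
have [h hE] := choice path_values.
exists h => y y' e Wy Wy' ye.
have [[d [xd ->]] [d' [xd' ->]]] := (hE y Wy, hE y' Wy').
exact/esym/(eval1_joins_add van xd (joinsS WV ye) xd').
Qed.

End CocycleEvaluation.

Section Paracompact.
Variable X : topologicalType.

Definition locally_finite (J : Type) (W : J -> set X) : Prop :=
  forall x : X, exists N : set X, nbhs x N /\ finite_set [set j | W j `&` N !=set0].

Lemma locally_finiteS (J : Type) (W W' : J -> set X) :
  (forall j, W' j `<=` W j) -> locally_finite W -> locally_finite W'.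
Proof.
move=> W'W lfW x; have [N [Nx finN]] := lfW x; exists N; split => //.
by apply: sub_finite_set finN => j [z [/W'W Wz Nz]]; exists z.
Qed.

Lemma locally_finite_closure_bigcup (J : Type) (W : J -> set X) (y : X) :
  locally_finite W -> closure (\bigcup_(j in setT) W j) y -> exists j, closure (W j) y.
Proof.
move=> lfW cy; apply: contrapT => /forallNP ncl.
have [N [Ny /(@finite_seqP {classic J}) [s Es]]] := lfW y.
have [M [My WM]] : exists M, nbhs y M /\ forall j : {classic J}, j \in s -> W j `&` M = set0.
  elim: s {Es} => [|a s [M [My WM]]]; first by exists setT; split => //; apply: filterT.
  have /existsNP [B /not_implyP [By /set0P/negP]] := ncl a; rewrite negbK => /eqP WB.
  exists (M `&` B); split; first exact: filterI.
  move=> j; rewrite inE => /orP [/eqP ->|js]; rewrite -subset0 => z [Wz [Mz Bz]].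
    by rewrite -WB.
  by rewrite -(WM j js).
have [z [[j _ Wz] [Nz Mz]]] := cy _ (filterI Ny My).
have : [set j | W j `&` N !=set0] j by exists z.
rewrite Es /= => js.
by have := WM j js; rewrite -subset0 => /(_ z); apply.
Qed.

Lemma locally_finite_bigcup_closure_closed (J : Type) (W : J -> set X) (K : set J) :
  locally_finite W -> closed (\bigcup_(j in K) closure (W j)).
Proof.
move=> lfW z cz; pose WK j := [set w | W j w /\ K j].
have lfWK : locally_finite WK by apply: locally_finiteS lfW => j w [].
have : closure (\bigcup_(j in setT) WK j) z.
  apply: (@closed_closure _ (\bigcup_(j in setT) WK j)); apply: closureS cz.
  by move=> w [j Kj cw]; apply: closureS cw => v Wv; exists j.
move=> /(locally_finite_closure_bigcup lfWK) [j cj].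
have [w [[_ Kj] _]] := cj setT filterT.
by exists j => //; apply: closureS cj => v [].
Qed.

Hypothesis pX : paracompact X.

(** Cover [C] by the neighbourhoods [O], refine locally finitely and keep the
    pieces meeting [C]: the closure of their union is the union of their closures. *)
Lemma paracompact_closure_avoid (C D : set X) : closed C ->
  (forall c, C c -> exists O, [/\ open O, O c & closure O `&` D = set0]) ->
  exists V, [/\ open V, C `<=` V & closure V `&` D = set0].
Proof.
move=> clC sepC.
have sep c : exists O : set X, [/\ open O, C c -> O c & closure O `&` D = set0].
  have [Cc|nCc] := pselect (C c).
    by have [Oc [? ? ?]] := sepC c Cc; exists Oc.
  by exists set0; split => //; [exact: open0 | rewrite closure0 set0I].
have [Oc sepO] := choice sep.
pose U (i : option X) := if i is Some c then Oc c else ~` C.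
have oU i : open (U i) by case: i => [c|] /=; [case: (sepO c) | exact: closed_openC].
have covU x : exists i, U i x.
  have [Cx|] := pselect (C x); last by exists None.
  by exists (Some x); case: (sepO x) => _ + _; apply.
have [J [W [oW covW refW lfW]]] := pX oU covU.
pose WC j := [set z | W j z /\ W j `&` C !=set0].
exists (\bigcup_(j in setT) WC j); split.
- apply: bigcup_open => j _.
  have [meets|nmeets] := pselect (W j `&` C !=set0).
    rewrite (_ : WC j = W j); first exact: oW.
    by apply/seteqP; split => z //= [].
  rewrite (_ : WC j = set0); first exact: open0.
  by apply/seteqP; split => z //= [].
- by move=> c Cc; have [j Wjc] := covW c; exists j => //; split => //; exists c.
- rewrite -subset0 => z [cz Dz].
  have lfWC : locally_finite WC by apply: locally_finiteS lfW => j z' [].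
  have [j cj] := locally_finite_closure_bigcup lfWC cz.
  have [_ [[_ [c [Wc Cc]]] _]] := cj setT filterT.
  have [[c0|] WU] := refW j; last exact: WU c Wc Cc.
  have : closure (Oc c0) z by apply: closureS cj => w [/WU].
  by case: (sepO c0) => _ _; rewrite -subset0 => + czO; apply; split.
Qed.

Hypothesis hX : hausdorff_space X.

Lemma paracompact_regular (C : set X) x : closed C -> ~ C x ->
  exists V, [/\ open V, C `<=` V & ~ closure V x].
Proof.
move=> clC nCx; have [] := @paracompact_closure_avoid C [set x] clC.
  move=> c Cc; have cx : c != x by apply: contraPneq nCx => <-.
  move: hX; rewrite open_hausdorff => /(_ c x cx) [[A B] /= [/set_mem Ac /set_mem Bx]].
  move=> [oA oB /eqP AB]; exists A; split => //.
  rewrite -subset0 => z [cz /= zx]; rewrite zx in cz.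
  have [w [Aw Bw]] := cz B (open_nbhs_nbhs (conj oB Bx)).
  by rewrite -subset0 in AB; apply: (AB w).
move=> V [oV CV clVx]; exists V; split => // cVx.
by rewrite -subset0 in clVx; apply: (clVx x).
Qed.

Lemma paracompact_separate_closed (A B : set X) :
  closed A -> closed B -> A `&` B = set0 ->
  exists U V, [/\ open U, open V, A `<=` U, B `<=` V & U `&` V = set0].
Proof.
move=> clA clB AB.
have sepA c : A c -> exists O, [/\ open O, O c & closure O `&` B = set0].
  move=> Ac; have nBc : ~ B c by move=> Bc; rewrite -subset0 in AB; exact: AB c (conj Ac Bc).
  have [V [oV BV ncV]] := paracompact_regular clB nBc.
  exists (~` closure V); split; [exact/closed_openC/closed_closure | exact: ncV |].
  rewrite -subset0 => b [cb Bb].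
  have [w [nw Vw]] := cb V (open_nbhs_nbhs (conj oV (BV b Bb))).
  by apply: nw; exact: subset_closure.
have [U [oU AU clUB]] := paracompact_closure_avoid clA sepA.
exists U, (~` closure U); split => //.
- exact/closed_openC/closed_closure.
- by move=> b Bb Ub; rewrite -subset0 in clUB; exact: clUB b (conj Ub Bb).
- by rewrite -subset0 => z [Uz]; apply; exact: subset_closure.
Qed.

Lemma paracompact_shrinking (J : Type) (W : J -> set X) :
  (forall j, open (W j)) -> (forall x, exists j, W j x) ->
  exists A : J -> set X,
    [/\ forall j, closed (A j), forall j, A j `<=` W j & forall x, exists j, A j x].
Proof.
move=> oW covW.
have shrink x : exists jO : J * set X, [/\ open jO.2, jO.2 x & closure jO.2 `<=` W jO.1].
  have [j Wjx] := covW x.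
  have [V [oV nWV nclVx]] := paracompact_regular (open_closedC (oW j)) (fun h => h Wjx).
  exists (j, ~` closure V); split => //=; first exact/closed_openC/closed_closure.
  move=> z cz; apply: contrapT => nWz.
  have [w [nw Vw]] := cz V (open_nbhs_nbhs (conj oV (nWV z nWz))).
  by apply: nw; apply: subset_closure.
have [jO HjO] := choice shrink.
have oO x : open (jO x).2 by case: (HjO x).
have covO x : exists y, (jO y).2 x by exists x; case: (HjO x).
have [L [P [oP covP refP lfP]]] := pX oO covO.
have [xl Pxl] := choice refP.
exists (fun j => \bigcup_(l in [set l | (jO (xl l)).1 = j]) closure (P l)); split.
- by move=> j; apply: locally_finite_bigcup_closure_closed.
- move=> j z [l /= <- cz]; case: (HjO (xl l)) => _ _; apply.
  exact: closureS (Pxl l) z cz.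
- move=> y; have [l Ply] := covP y; exists (jO (xl l)).1; exists l => //.
  exact: subset_closure.
Qed.

(** Urysohn's function for [A] and [~` U], where the open sets [U] and [V]
    separate [A] from [~` W]; it vanishes on the neighbourhood [V] of [~` W]. *)
Lemma paracompact_urysohn_bump (R : realType) (A W : set X) :
  closed A -> open W -> A `<=` W ->
  exists f : X -> R, [/\ continuous f, forall x, 0 <= f x,
    forall y, ~ W y -> \forall z \near y, f z = 0 & forall x, A x -> f x = 1].
Proof.
move=> clA oW AW; have AnW : A `&` ~` W = set0 by rewrite -subset0 => z [/AW].
have [U [V [oU oV AU nWV UV]]] := paracompact_separate_closed clA (open_closedC oW) AnW.
have nX : normal_space X := (@normal_openP R X).2 paracompact_separate_closed.
have : uniform_separator (~` U) A.
  apply: ((@normal_separatorP R X).1 nX); [exact: open_closedC | exact: clA |].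
  by rewrite -subset0 => z [nU /AU].
move=> /(@uniform_separatorP _ R) [f [f_cont f_range f0 f1]].
exists f; split => //.
- by move=> x; have /andP[] := f_range (f x) (imageT f x).
- move=> y nWy; apply: filterS (open_nbhs_nbhs (conj oV (nWV y nWy))) => z Vz.
  apply: f0; exists z => //= Uz.
  by rewrite -subset0 in UV; apply: (UV z).
- by move=> x Ax; apply: f1; exists x.
Qed.

Lemma paracompact_bump_functions (R : realType) (J : Type) (W : J -> set X) :
  (forall j, open (W j)) -> (forall x, exists j, W j x) ->
  exists phi : J -> X -> R, [/\ forall j, continuous (phi j),
     forall j x, 0 <= phi j x,
     forall j y, ~ W j y -> \forall z \near y, phi j z = 0 &
     forall y, exists j, phi j y = 1].
Proof.
move=> oW covW; have [A [clA AW covA]] := paracompact_shrinking oW covW.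
have [phi phiP] := choice (fun j => paracompact_urysohn_bump R (clA j) (oW j) (AW j)).
exists phi; split => [j|j|j|y]; try by case: (phiP j).
by have [j Ay] := covA y; exists j; case: (phiP j) => _ _ _; apply.
Qed.

End Paracompact.

Lemma continuous_comp_within (T U X : topologicalType) (A : set T) (B : set U)
    (L : T -> U) (g : U -> X) :
  continuous L -> (forall x, A x -> B (L x)) ->
  {within B, continuous g} -> {within A, continuous (g \o L)}.
Proof.
move=> cL AB /subspace_continuousP cg; apply/subspace_continuousP => x Ax W /= gW.
have gW' := cg (L x) (AB x Ax) W gW.
have : nbhs x (fun y => B (L y) -> W (g (L y))) := cL x _ gW'.
by apply: filterS => y /= + Ay; apply; exact: AB.
Qed.

Section AffineSimplices.
Variables (R : realType) (X : topologicalType).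

Lemma faceE n (i : 'I_n.+2) (u : 'rV[R]_n.+1) (j : 'I_n.+2) :
  face i u ord0 j =
    if (j < i)%N then u ord0 (inord j) else if j == i then 0 else u ord0 (inord j.-1).
Proof.
rewrite /face mxE; case: unliftP => [k ->|->]; last by rewrite ltnn eqxx.
rewrite -val_eqE /= /bump; case: (leqP i k) => ik /=.
  by rewrite add1n ltnNge (leq_trans ik (leqnSn _)) /= gtn_eqF ?ltnS // add0n inord_val.
by rewrite add0n ik inord_val.
Qed.

Lemma std_simplex0 (u : 'rV[R]_1) : std_simplex u -> u ord0 (inord 0) = 1.
Proof.
by move=> [_]; rewrite big_ord1 => <-; congr (u _ _); apply/val_inj; rewrite /= inordK.
Qed.

Lemma std_simplex1 (u : 'rV[R]_2) : std_simplex u ->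
  [/\ 0 <= u ord0 (inord 0), 0 <= u ord0 (inord 1) &
      u ord0 (inord 0) + u ord0 (inord 1) = 1].
Proof.
move=> [u_ge0 u_sum]; split => //; move: u_sum; rewrite big_ord_recl big_ord1.
by congr (_ + _ = _); congr (u _ _); apply/val_inj; rewrite /= inordK.
Qed.

Lemma std_simplex2 (u : 'rV[R]_3) : std_simplex u ->
  [/\ 0 <= u ord0 (inord 0), 0 <= u ord0 (inord 1), 0 <= u ord0 (inord 2) &
      u ord0 (inord 0) + u ord0 (inord 1) + u ord0 (inord 2) = 1].
Proof.
move=> [u_ge0 u_sum]; split => //; move: u_sum.
rewrite big_ord_recl big_ord_recl big_ord1 addrA.
by congr (_ + _ + _ = _); congr (u _ _); apply/val_inj; rewrite /= inordK.
Qed.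

Lemma coord_comb2_continuous (a b : R) :
  continuous (fun u : 'rV[R]_2 => a * u ord0 (inord 0) + b * u ord0 (inord 1)).
Proof.
move=> u; have cu i := @coord_continuous R 1 2 ord0 i u.
exact: cvgD (cvgMl_tmp (cu _)) (cvgMl_tmp (cu _)).
Qed.

Lemma coord_comb3_continuous (a b c : R) : continuous (fun u : 'rV[R]_3 =>
  a * u ord0 (inord 0) + b * u ord0 (inord 1) + c * u ord0 (inord 2)).
Proof.
move=> u; have cu i := @coord_continuous R 1 3 ord0 i u.
exact: cvgD (cvgD (cvgMl_tmp (cu _)) (cvgMl_tmp (cu _))) (cvgMl_tmp (cu _)).
Qed.

Variable g : R -> X.
Hypothesis g_cont : {within @unit_interval R, continuous g}.

Definition path_segment (a b : R) : 'rV[R]_2 -> X :=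
  fun u => g (a * u ord0 (inord 0) + b * u ord0 (inord 1)).

Definition path_triangle (a b c : R) : 'rV[R]_3 -> X :=
  fun u => g (a * u ord0 (inord 0) + b * u ord0 (inord 1) + c * u ord0 (inord 2)).

Lemma path_segment_range a b (u : 'rV[R]_2) : a <= b -> std_simplex u ->
  a <= a * u ord0 (inord 0) + b * u ord0 (inord 1) <= b.
Proof. by move=> ab /std_simplex1 [? ? ?]; apply/andP; split; nra. Qed.

Lemma path_segment_sing a b : 0 <= a -> a <= b -> b <= 1 ->
  sing_simplex (path_segment a b).
Proof.
move=> a0 ab b1; apply: (continuous_comp_within (@coord_comb2_continuous a b) _ g_cont).
by move=> u /(path_segment_range ab) /andP[? ?]; apply/andP; split; lra.
Qed.

Lemma path_triangle_sing a b c : 0 <= a -> a <= b -> b <= c -> c <= 1 ->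
  sing_simplex (path_triangle a b c).
Proof.
move=> a0 ab bc c1.
apply: (continuous_comp_within (@coord_comb3_continuous a b c) _ g_cont).
by move=> u /std_simplex2 [? ? ? ?]; apply/andP; split; nra.
Qed.

Lemma same_simplex_asbool n (s s' t : 'rV[R]_n.+1 -> X) : same_simplex s s' ->
  `[< same_simplex s t >] = `[< same_simplex s' t >].
Proof.
move=> ss'; apply/asboolP/asboolP; first exact/same_simplex_trans/same_simplex_sym.
exact: same_simplex_trans.
Qed.

Lemma path_segment_joins (S : set X) a b : 0 <= a -> a <= b -> b <= 1 ->
  (forall s, a <= s <= b -> S (g s)) ->
  joins S (g a) (g b) [:: (1, path_segment a b)].
Proof.
move=> a0 ab b1 gS; split.
  move=> p [<-|[]]; split; first exact: path_segment_sing.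
  by move=> _ [u Hu <-]; apply/gS/path_segment_range.
move=> t; rewrite /bnd /= cats0 /coef big_map big_enum /= !big_cons big_nil /=.
rewrite big_ord_recl big_ord1 /= addr0.
rewrite (@same_simplex_asbool _ _ (point_simplex (g b))); last first.
  move=> u /std_simplex0 u1; rewrite /path_segment /point_simplex /= !faceE.
  by rewrite -!val_eqE /= !inordK //= mulr0 add0r u1 mulr1.
rewrite (@same_simplex_asbool _ (path_segment a b \o face (lift ord0 ord0))
  (point_simplex (g a))); last first.
  move=> u /std_simplex0 u1; rewrite /path_segment /point_simplex /= !faceE.
  by rewrite -!val_eqE /= !inordK //= mulr0 addr0 u1 mulr1.
by rewrite expr0 mul1r expr1 mulN1r.
Qed.

Variable xi : ('rV[R]_2 -> X) -> R.
Hypothesis xi_cocycle : cocycle1 xi.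

(** The cocycle condition on [path_triangle a b c], whose faces are the three segments. *)
Lemma xi_segment_add a b c : 0 <= a -> a <= b -> b <= c -> c <= 1 ->
  xi (path_segment a c) = xi (path_segment a b) + xi (path_segment b c).
Proof.
move=> a0 ab bc c1.
have := xi_cocycle.2 _ (path_triangle_sing a0 ab bc c1).
rewrite !big_ord_recl big_ord0 addr0 /=.
have -> : xi (path_triangle a b c \o face ord0) = xi (path_segment b c).
  apply: xi_cocycle.1 => u _; rewrite /path_triangle /path_segment /= !faceE.
  by rewrite -!val_eqE /= !inordK //= mulr0 add0r.
have -> : xi (path_triangle a b c \o face (lift ord0 ord0)) = xi (path_segment a c).
  apply: xi_cocycle.1 => u _; rewrite /path_triangle /path_segment /= !faceE.
  by rewrite -!val_eqE /= !inordK //= mulr0 addr0.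
have -> : xi (path_triangle a b c \o face (lift ord0 (lift ord0 ord0))) =
    xi (path_segment a b).
  apply: xi_cocycle.1 => u _; rewrite /path_triangle /path_segment /= !faceE.
  by rewrite -!val_eqE /= !inordK //= mulr0 addr0.
rewrite /bump /= expr0 expr1 (_ : (1 + (1 + 0))%N = 2%N) // expr2; lra.
Qed.

Lemma subdivision_unit n (t : nat -> R) : t 0%N = 0 -> t n = 1 ->
  (forall m, (m < n)%N -> t m <= t m.+1) -> forall m, (m <= n)%N -> 0 <= t m <= 1.
Proof.
move=> t0 tn t_incr m mn; apply/andP; split.
  elim: m mn => [|m IH] mn; first by rewrite t0.
  exact: le_trans (IH (ltnW mn)) (t_incr _ mn).
have t_mono k : (m + k <= n)%N -> t m <= t (m + k)%N.
  elim: k => [|k IH]; first by rewrite addn0.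
  rewrite addnS => mkn.
  exact: le_trans (IH (ltnW mkn)) (t_incr _ mkn).
by rewrite -tn -(subnKC mn) t_mono // subnKC.
Qed.

Lemma xi_subdivision_sum n (t : nat -> R) : t 0%N = 0 -> t n = 1 ->
  (forall m, (m < n)%N -> t m <= t m.+1) ->
  \sum_(m < n) xi (path_segment (t m) (t m.+1)) = xi (path_segment 0 1).
Proof.
move=> t0 tn t_incr; have t_unit := subdivision_unit t0 tn t_incr.
suff sum_prefix m : (m <= n)%N ->
    \sum_(i < m) xi (path_segment (t i) (t i.+1)) = xi (path_segment 0 (t m)).
  by rewrite sum_prefix // tn.
elim: m => [|m IH] mn.
  by rewrite big_ord0 t0; have := xi_segment_add (lexx 0) (lexx 0) (lexx 0) ler01; lra.
have /andP[tm0 tm1] := t_unit m (ltnW mn); have /andP[_ tSm1] := t_unit m.+1 mn.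
by rewrite big_ord_recr /= IH ?(ltnW mn) // (xi_segment_add (lexx 0) tm0 (t_incr m mn)).
Qed.

Lemma path_simplex_segment : same_simplex (path_simplex g) (path_segment 0 1).
Proof.
move=> u _; rewrite /path_simplex /path_segment mul0r add0r mul1r.
by congr (g (u _ _)); apply/val_inj; rewrite /= inordK.
Qed.

End AffineSimplices.

Section Subdivisions.
Variables (R : realType) (X : topologicalType).

Lemma unit_interval_itv : `[(0 : R), 1]%classic = @unit_interval R.
Proof. by apply/seteqP; split => x /=; rewrite in_itv. Qed.

Lemma within_unit_ball (g : R -> X) (x : R) (W : set X) :
  {within @unit_interval R, continuous g} -> unit_interval x -> open W -> W (g x) ->
  exists2 e : R, 0 < e & forall s, unit_interval s -> `|x - s| < e -> W (g s).
Proof.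
move=> /subspace_continuousP cg ux oW Wgx.
have : nbhs x (fun s => unit_interval s -> W (g s)).
  exact: cg x ux W (open_nbhs_nbhs (conj oW Wgx)).
by move=> /nbhs_ballP [e e0 xe]; exists e => // s us xs; apply: xe.
Qed.

Lemma lebesgue_number_unit (J : Type) (W : J -> set X) (g : R -> X) :
  (forall j, open (W j)) -> (forall x, exists j, W j x) ->
  {within @unit_interval R, continuous g} ->
  exists N : nat, forall x, unit_interval x -> exists j, forall s,
    unit_interval s -> `|s - x| <= N.+1%:R^-1 -> W j (g s).
Proof.
move=> oW covW cg.
have cpt := @segment_compact R 0 1; rewrite unit_interval_itv in cpt.
pose P n (x : R) := exists j, forall s,
  unit_interval s -> `|s - x| <= n.+1%:R^-1 -> W j (g s).
have near_P x : unit_interval x -> \forall x' \near x & n \near \oo, P n x'.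
  move=> ux; have [j Wj] := covW (g x).
  have [e e0 xe] := within_unit_ball cg ux (oW j) Wj.
  have e2 : 0 < e / 2 by rewrite divr_gt0.
  exists (ball x (e / 2), [set n : nat | n.+1%:R^-1 < e / 2]) => /=.
    by split; [exact: nbhsx_ballx | exact: (near_infty_natSinv_lt (PosNum e2))].
  case => x' n /= [xx' ne]; exists j => s us sx'; apply: xe => //.
  rewrite (splitr e); apply: le_lt_trans (ler_distD x' x s) _.
  by rewrite (distrC x' s); apply: ltrD xx' (le_lt_trans sx' ne).
have [N _ NP] := (compact_near_coveringP _).1 cpt nat \oo P _ near_P.
by exists N => x ux; exact: NP N (leqnn N) x ux.
Qed.

Lemma admissible_exists (J : Type) (W : J -> set X) (g : R -> X) :
  (forall j, open (W j)) -> (forall x, exists j, W j x) ->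
  {within @unit_interval R, continuous g} ->
  exists n t k, admissible W g n t k.
Proof.
move=> oW covW cg; have [N NW] := lebesgue_number_unit oW covW cg.
pose t (m : nat) : R := m%:R / N.+1%:R.
have N_gt0 : 0 < N.+1%:R :> R by rewrite ltr0n.
have t_unit m : (m <= N.+1)%N -> unit_interval (t m).
  move=> mN; apply/andP; split; first by rewrite divr_ge0 // ler0n.
  by rewrite ler_pdivrMr // mul1r ler_nat.
have t_step m : t m.+1 - t m = N.+1%:R^-1.
  by rewrite /t -mulrBl -natrB // subSnn mul1r.
have [j0 _] := covW (g 0).
have pick m : exists j, (m <= N.+1)%N -> forall s,
    unit_interval s -> `|s - t m| <= N.+1%:R^-1 -> W j (g s).
  have [mN|_] := boolP (m <= N.+1)%N; last by exists j0.
  by have [j Wj] := NW (t m) (t_unit m mN); exists j.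
have [k kW] := choice pick.
exists N.+1, t, k; split.
- by rewrite /t mul0r.
- by rewrite /t divff // pnatr_eq0.
- by move=> m _; rewrite -subr_ge0 t_step invr_ge0 ler0n.
- clearbody t; move=> m mN s /andP [tms stm]; apply: (kW m (ltnW mN)).
    have /andP [? ?] := t_unit m (ltnW mN); have /andP [? ?] := t_unit m.+1 mN.
    by apply/andP; split; lra.
  by rewrite -(t_step m) ger0_norm; lra.
Qed.

End Subdivisions.

Lemma continuous_near_eq (R : realType) (T : topologicalType) (f f' : T -> R) (y : T) :
  (\forall z \near y, f z = f' z) -> {for y, continuous f'} -> {for y, continuous f}.
Proof.
move=> ff' cf'; rewrite /prop_for /continuous_at (nbhs_singleton ff').
apply: cvg_trans cf'; apply: near_eq_cvg; near=> z; exact/esym/(near ff' z).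
Unshelve. all: by end_near.
Qed.

Section Gluing.
Variables (R : realType) (X : topologicalType) (J : Type) (W : J -> set X).
Hypothesis W_open : forall j, open (W j).
Hypothesis W_lf : locally_finite W.

Lemma fsbig_locally_finite (y : X) :
  exists (N : set X) (D : {fset {classic J}}), [/\ nbhs y N,
  forall z, N z -> forall G : J -> R, (forall j, ~ W j z -> G j = 0) ->
    \sum_(j \in [set: {classic J}]) G j = \sum_(j <- D) G j &
  forall (j : {classic J}) z, N z -> W j z -> j \in D].
Proof.
have [N [Ny finN]] := W_lf y.
have finN' : finite_set [set j : {classic J} | W j `&` N !=set0] := finN.
exists N, (fset_set [set j : {classic J} | W j `&` N !=set0]); split => //.
- move=> z Nz G G0; rewrite -fsbig_finite //.
  apply/esym/fsbig_widen => // j [_ /= nj]; apply: G0 => Wjz; apply: nj.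
  by exists z.
- by move=> j z Nz Wjz; rewrite in_fset_set //; apply/mem_set; exists z.
Qed.

Variables (phi h : J -> X -> R).
Hypothesis phi_cont : forall j, continuous (phi j).
Hypothesis phi_ge0 : forall j x, 0 <= phi j x.
Hypothesis phi_supp : forall j y, ~ W j y -> \forall z \near y, phi j z = 0.
Hypothesis phi_one : forall y, exists j, phi j y = 1.
Hypothesis h_diff : forall i j x, W i x -> W j x ->
  exists V, [/\ nbhs x V, V `<=` W i `&` W j &
    forall y, V y -> h i y - h j y = h i x - h j x].

Definition weighted_mean (z : X) : R :=
  (\sum_(j \in [set: {classic J}]) phi j z * h j z) / \sum_(j \in [set: {classic J}]) phi j z.

Lemma phi_off j z : ~ W j z -> phi j z = 0.
Proof. by move=> /phi_supp /nbhs_singleton. Qed.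

(** Near [y], [h i - weighted_mean] is the finite weighted mean of the
    locally constant differences [h i - h j]. *)
Lemma weighted_mean_diff_continuous i :
  {within W i, continuous (fun z => h i z - weighted_mean z)}.
Proof.
rewrite continuous_open_subspace // => y /set_mem Wiy.
have [N [D [Ny sumE WD]]] := fsbig_locally_finite y.
have sum_ge1 z : N z -> 1 <= \sum_(j <- D) phi j z.
  have [j phij1] := phi_one z; move=> Nz; rewrite -phij1.
  have Wjz : W j z by apply: contrapT => /phi_off; rewrite phij1 => /eqP; rewrite oner_eq0.
  rewrite (big_rem (j : {classic J})) /=; last exact: WD Nz Wjz.
  by rewrite lerDl; apply: sumr_ge0.
pose c j := if `[< W j y >] then h i y - h j y else 0.
have near_c : \forall z \near y, forall j, j \in D ->
    phi j z * (h i z - h j z) = phi j z * c j.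
  have : \forall z \near y, (\bigcap_(j in [set` D]) 
      [set z | phi j z * (h i z - h j z) = phi j z * c j]) z.
    apply: filter_bigI => j _; rewrite /c; case: asboolP => Wjy.
      have [V [yV _ Vdiff]] := h_diff Wiy Wjy.
      by apply: filterS yV => z /Vdiff /= ->.
    by apply: filterS (phi_supp Wjy) => z /= ->; rewrite !mul0r.
  by apply: filterS => z Dz j jD; exact: Dz.
apply: (@continuous_near_eq _ _ _
  (fun z => (\sum_(j <- D) phi j z * c j) / \sum_(j <- D) phi j z)).
  near=> z; have Nz : N z by exact: (near Ny z).
  have S_neq0 : \sum_(j <- D) phi j z != 0.
    by rewrite gt_eqF // (lt_le_trans ltr01 (sum_ge1 z Nz)).
  rewrite /weighted_mean (sumE z Nz (fun j => phi j z)); last by move=> j /phi_off.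
  rewrite (sumE z Nz (fun j => phi j z * h j z)); last by move=> j /phi_off ->; rewrite mul0r.
  have Dc : forall j, j \in D -> phi j z * (h i z - h j z) = phi j z * c j.
    exact: (near near_c z).
  rewrite -(eq_big_seq _ Dc) (eq_bigr _ (fun j _ => mulrBr _ _ _)) sumrB -mulr_suml.
  by field.
apply: continuousM.
  exact: (cvg_big add_continuous _ (fun j _ => cvgMr_tmp (@phi_cont j y))).
apply: continuousV; last exact: (cvg_big add_continuous _ (fun j _ => @phi_cont j y)).
by rewrite gt_eqF // (lt_le_trans ltr01 (sum_ge1 y (nbhs_singleton Ny))).
Unshelve. all: by end_near.
Qed.

Lemma weighted_mean_closed_1form : (forall x, exists j, W j x) ->
  closed_1form W (fun j z => h j z - weighted_mean z).
Proof.
move=> W_cover; split => // [i|i j x Wix Wjx].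
  exact: weighted_mean_diff_continuous.
have [V [xV VW Vdiff]] := h_diff Wix Wjx.
by exists V; split => // y Vy; rewrite opprB addrA subrK Vdiff // opprB addrA subrK.
Qed.

End Gluing.

Section Potentials.
Variables (R : realType) (X : topologicalType).
Hypothesis X_HLC : HLC R X.
Variable xi : ('rV[R]_2 -> X) -> R.
Hypothesis xi_cocycle : cocycle1 xi.

Lemma HLC_potential_cover : exists (O : X -> set X) (h : X -> X -> R),
  forall x, [/\ open (O x), O x x & potential_on xi (O x) (h x)].
Proof.
have local x : exists Oh : set X * (X -> R),
    [/\ open Oh.1, Oh.1 x & potential_on xi Oh.1 Oh.2].
  have [V1 [xV1 _ V1_triv]] := X_HLC (@filterT _ (nbhs x) _).
  have [V2 [xV2 V21 V2_triv]] := X_HLC xV1.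
  have van := hom_trivial1_vanishes xi_cocycle (V1_triv 1%N).
  have [h hV2] := potential_exists van V21 (V2_triv 0%N) (nbhs_singleton xV2).
  exists (V2°, h); split => //=; first exact: open_interior.
  exact: potential_onS (@interior_subset _ V2) hV2.
have [Oh Oh_prop] := choice local.
by exists (fst \o Oh), (snd \o Oh).
Qed.

(** Points near [x] are joined to [x] by chains inside [Wi `&` Wj], along
    which both potentials increase by the same amount. *)
Lemma potential_diff_locally_constant (Wi Wj : set X) hi hj x :
  open Wi -> open Wj -> potential_on xi Wi hi -> potential_on xi Wj hj ->
  Wi x -> Wj x -> exists V, [/\ nbhs x V, V `<=` Wi `&` Wj &
    forall y, V y -> hi y - hj y = hi x - hj x].
Proof.
move=> oWi oWj hiP hjP Wix Wjx.
have [V [xV VW V_triv]] := X_HLC (open_nbhs_nbhs (conj (openI oWi oWj) (conj Wix Wjx))).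
exists V; split => // y Vy; have [Wiy Wjy] := VW y Vy.
have [e xye] := hom_trivial0_joins (V_triv 0%N) (nbhs_singleton xV) Vy.
rewrite (hiP x y e) ?(hjP x y e) //; first lra.
  by apply: (joinsS _ xye) => z [].
by apply: (joinsS _ xye) => z [].
Qed.

Variable g : R -> X.
Hypothesis g_loop : loop g.

Lemma potential_riemann_sum (J : Type) (W : J -> set X) (h : J -> X -> R)
    (Q : X -> R) n t k :
  (forall j, potential_on xi (W j) (h j)) -> admissible W g n t k ->
  riemann_sum (fun j z => h j z - Q z) g n t k = xi (path_simplex g).
Proof.
move=> hW [t0 tn t_incr gW]; have [g_cont g01] := g_loop.
have t_unit := subdivision_unit t0 tn t_incr.
have step (m : 'I_n) : h (k m) (g (t m.+1)) - Q (g (t m.+1)) -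
      (h (k m) (g (t m)) - Q (g (t m))) =
    xi (path_segment g (t m) (t m.+1)) - (Q (g (t m.+1)) - Q (g (t m))).
  case: m => [m ltmn] /=.
  have /andP [tm0 _] := t_unit m (ltnW ltmn); have /andP [_ tSm1] := t_unit m.+1 ltmn.
  have Wm : forall s, t m <= s <= t m.+1 -> W (k m) (g s) by exact: gW.
  have joins_m := path_segment_joins g_cont tm0 (t_incr m ltmn) tSm1 Wm.
  rewrite (hW _ _ _ _ _ _ joins_m); try by apply: Wm; rewrite lexx t_incr.
  rewrite /eval1 big_cons big_nil mul1r addr0; lra.
rewrite /riemann_sum (eq_bigr _ (fun m _ => step m)) sumrB.
rewrite (xi_subdivision_sum g_cont xi_cocycle t0 tn t_incr).
rewrite -(big_mkord xpredT (fun m => Q (g (t m.+1)) - Q (g (t m)))) telescope_sumr //.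
by rewrite tn t0 g01 subrr subr0 (xi_cocycle.1 _ _ (path_simplex_segment g)).
Qed.

End Potentials.

Theorem mainTheorem11 (R : realType) (X : topologicalType) :
  hausdorff_space X -> paracompact X -> HLC R X ->
  forall xi : ('rV[R]_2 -> X) -> R, cocycle1 xi ->
  exists (I : Type) (U : I -> set X) (f : I -> X -> R),
    closed_1form U f /\
    forall g : R -> X, loop g -> path_integral_is U f g (xi (path_simplex g)).
Proof.
move=> X_T2 X_para X_HLC xi xi_cocycle.
have [P [hP P_pot]] := HLC_potential_cover X_HLC xi_cocycle.
have P_open x : open (P x) by case: (P_pot x).
have P_cover x : exists y, P y x by exists x; case: (P_pot x).
have [J [W [W_open W_cover W_ref W_lf]]] := X_para _ _ P_open P_cover.
have [c Wc] := choice W_ref.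
pose h j := hP (c j).
have h_pot j : potential_on xi (W j) (h j).
  by case: (P_pot (c j)) => _ _; apply: potential_onS.
have h_diff i j x : W i x -> W j x -> exists V, [/\ nbhs x V, V `<=` W i `&` W j &
    forall y, V y -> h i y - h j y = h i x - h j x].
  exact: potential_diff_locally_constant.
have [phi [phi_cont phi_ge0 phi_supp phi_one]] :=
  @paracompact_bump_functions _ X_para X_T2 R _ _ W_open W_cover.
exists J, W, (fun j z => h j z - weighted_mean phi h z); split.
  exact: (weighted_mean_closed_1form W_open W_lf phi_cont phi_ge0 phi_supp phi_one
            h_diff W_cover).
move=> g g_loop; split; first exact: admissible_exists W_open W_cover g_loop.1.
by move=> n t k; apply: potential_riemann_sum.
Qed.
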